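(* Let $A=(0,0)$ and $B=(b_1,b_2)$ with $b_1>0$ and $0\le b_2\le b_1-1$, and let $s=b_2/b_1$ and $Q=(1-s)(1,0)+s(3/2,1/2)$. For $k\in(0,1)$ let $P_k=(1-k)(1,1)+kQ$ and $\gamma_k(t)=Bt^3+3P_kt^2(1-t)+3P_kt(1-t)^2$, $0\le t\le1$. If $k_1>k_2$ are in $(0,1)$, then the curves $\gamma_1=\gamma_{k_1}$ and $\gamma_2=\gamma_{k_2}$ do not intersect except at their common endpoints $A$ and $B$, and, except at the endpoints, $\gamma_2$ lies above $\gamma_1$.
   Context: Each $\gamma_k$ is the cubic B\'ezier curve with endpoints $A=\gamma_k(0)$, $B=\gamma_k(1)$ and both inner control points equal to $P_k$. *)

From HB Require Import structures.
From mathcomp Require Import all_boot all_order all_algebra.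
From mathcomp Require Import reals.
Set Implicit Arguments. Unset Strict Implicit. Unset Printing Implicit Defensive.
Import Order.TTheory GRing.Theory Num.Theory.
Local Open Scope ring_scope.

Definition pt (R : realType) := (R * R)%type.

Definition padd (R : realType) (p q : pt R) : pt R := (p.1 + q.1, p.2 + q.2).
Definition pscale (R : realType) (c : R) (p : pt R) : pt R := (c * p.1, c * p.2).

Definition bezier (R : realType) (A P B : pt R) (t : R) : pt R :=
  padd (pscale ((1 - t) ^+ 3) A)
   (padd (pscale (3 * t * (1 - t) ^+ 2) P)
    (padd (pscale (3 * t ^+ 2 * (1 - t)) P) (pscale (t ^+ 3) B))).

Definition Qpt (R : realType) (b1 b2 : R) : pt R :=
  let s := b2 / b1 in
  padd (pscale (1 - s) (1, 0)) (pscale s (3 / 2, 1 / 2)).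

Definition Ppt (R : realType) (b1 b2 k : R) : pt R :=
  padd (pscale (1 - k) (1, 1)) (pscale k (Qpt b1 b2)).

Definition gam (R : realType) (b1 b2 k : R) (t : R) : pt R :=
  bezier (0, 0) (Ppt b1 b2 k) (b1, b2) t.

(* Write q(t) = 3t(1-t), d = b1 - b2, u = b2/(2 b1) and hump a c t = a q(t) + c t^3.
   The coordinates of gamma_k are x = hump 1 e t + u hump k d t and
   y = x - hump k d t, with e = b1 - u d >= 1.  On [0,1], hump a c is strictly
   increasing in t when 0 < a <= c, and nondecreasing in a.  Suppose
   gamma_k1(t1) and gamma_k2(t2) have the same abscissa.  If t1 < t2, the increase
   of hump 1 e must be compensated by the u-term, so hump k1 d t1 > hump k2 d t2;
   if t1 >= t2 the same inequality follows from monotonicity in t and in k,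
   except when t1 = t2 is an endpoint.  Hence gamma_k1 lies strictly below. *)
From HB Require Import structures.
From mathcomp Require Import all_boot all_order all_algebra.
From mathcomp Require Import reals ring lra.
Set Implicit Arguments. Unset Strict Implicit. Unset Printing Implicit Defensive.
Import Order.TTheory GRing.Theory Num.Theory.
Local Open Scope ring_scope.

Section Hump.
Variable R : realFieldType.

Definition hump (a c t : R) : R := a * (3 * t * (1 - t)) + c * t ^+ 3.

Lemma hump_ltr (a c t1 t2 : R) :
  0 < a <= c -> 0 <= t1 -> t1 < t2 -> t2 <= 1 -> hump a c t1 < hump a c t2.
Proof.
move=> /andP[a_gt0 a_le_c] t1_ge0 t12 t2_le1; rewrite -subr_gt0.
have -> : hump a c t2 - hump a c t1 =
    (t2 - t1) * (a * (3 * (1 - t1) * (1 - t2) + (t2 - t1) ^+ 2)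
                 + (c - a) * (t1 ^+ 2 + t1 * t2 + t2 ^+ 2)) by rewrite /hump; ring.
apply: mulr_gt0; first lra.
have : 0 < a * (3 * (1 - t1) * (1 - t2) + (t2 - t1) ^+ 2) by apply: mulr_gt0 => //; nra.
have : 0 <= (c - a) * (t1 ^+ 2 + t1 * t2 + t2 ^+ 2) by apply: mulr_ge0; nra.
lra.
Qed.

Lemma hump_lel (a a' c t : R) :
  a <= a' -> 0 <= t <= 1 -> hump a c t <= hump a' c t.
Proof.
move=> aa' /andP[t_ge0 t_le1]; rewrite /hump lerD2r.
by apply: ler_wpM2r => //; nra.
Qed.

Lemma hump_ltl (a a' c t : R) :
  a < a' -> 0 < t < 1 -> hump a c t < hump a' c t.
Proof.
move=> aa' /andP[t_gt0 t_lt1]; rewrite /hump ltrD2r.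
by rewrite ltr_pM2r //; nra.
Qed.

Lemma hump_lt_of_same_abscissa (u e d k1 k2 t1 t2 : R) :
  0 <= u -> 1 <= e -> 0 < k2 < k1 -> k2 <= d ->
  0 <= t1 <= 1 -> 0 <= t2 <= 1 ->
  hump 1 e t1 + u * hump k1 d t1 = hump 1 e t2 + u * hump k2 d t2 ->
  hump k2 d t2 < hump k1 d t1 \/ t1 = t2 /\ (t1 = 0 \/ t1 = 1).
Proof.
move=> u_ge0 e_ge1 /andP[k2_gt0 k21] k2_le_d ht1 ht2 same_x.
have [/andP[t1_ge0 t1_le1] /andP[t2_ge0 t2_le1]] := (ht1, ht2).
case: (ltgtP t1 t2) => [t12|t21|<-].
- left; rewrite ltNge; apply/negP => h_le.
  have : hump 1 e t1 < hump 1 e t2 by apply: hump_ltr; rewrite ?ltr01.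
  have := ler_wpM2l u_ge0 h_le; lra.
- left; apply: lt_le_trans (hump_lel d (ltW k21) ht1).
  by apply: hump_ltr; rewrite ?k2_gt0.
- have [t1_gt0|t1_0] := ltP 0 t1; last by right; split=> //; left; lra.
  have [t1_lt1|t1_1] := ltP t1 1; last by right; split=> //; right; lra.
  by left; apply: hump_ltl; rewrite ?t1_gt0.
Qed.

End Hump.

Section Curves.
Variable R : realType.

Lemma bezier0 (A P B : pt R) : bezier A P B 0 = A.
Proof. by case: A => a1 a2; rewrite /bezier /padd /pscale /=; congr pair; ring. Qed.

Lemma bezier1 (A P B : pt R) : bezier A P B 1 = B.
Proof. by case: B => b1 b2; rewrite /bezier /padd /pscale /=; congr pair; ring. Qed.

Variables b1 b2 : R.
Hypothesis b1_neq0 : b1 != 0.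

Lemma gam_x (k t : R) :
  (gam b1 b2 k t).1 = hump 1 (b1 - b2 / (2 * b1) * (b1 - b2)) t
                      + b2 / (2 * b1) * hump k (b1 - b2) t.
Proof.
rewrite /gam /bezier /Ppt /Qpt /padd /pscale /hump /=.
by field; rewrite ?b1_neq0 ?pnatr_eq0.
Qed.

Lemma gam_y (k t : R) :
  (gam b1 b2 k t).2 = (gam b1 b2 k t).1 - hump k (b1 - b2) t.
Proof.
rewrite /gam /bezier /Ppt /Qpt /padd /pscale /hump /=.
by field; rewrite ?b1_neq0 ?pnatr_eq0.
Qed.

End Curves.

Theorem lemma8 (R : realType) (b1 b2 k1 k2 : R) :
  0 < b1 -> 0 <= b2 -> b2 <= b1 - 1 ->
  0 < k1 < 1 -> 0 < k2 < 1 -> k2 < k1 ->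
  (forall t1 t2 : R, 0 <= t1 <= 1 -> 0 <= t2 <= 1 ->
     gam b1 b2 k1 t1 = gam b1 b2 k2 t2 ->
     gam b1 b2 k1 t1 = (0, 0) \/ gam b1 b2 k1 t1 = (b1, b2)) /\
  (forall t1 t2 : R, 0 < t1 < 1 -> 0 < t2 < 1 ->
     (gam b1 b2 k1 t1).1 = (gam b1 b2 k2 t2).1 ->
     (gam b1 b2 k1 t1).2 < (gam b1 b2 k2 t2).2).
Proof.
move=> b1_gt0 b2_ge0 b2_le _ /andP[k2_gt0 k2_lt1] k21.
have b1_neq0 : b1 != 0 by rewrite gt_eqF.
have u_ge0 : 0 <= b2 / (2 * b1) by apply: divr_ge0; lra.
have e_ge1 : 1 <= b1 - b2 / (2 * b1) * (b1 - b2).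
  have : b2 / (2 * b1) * (b1 - b2) <= b2 / (2 * b1) * b1.
    by apply: ler_wpM2l; lra.
  have -> : b2 / (2 * b1) * b1 = b2 / 2 by field.
  lra.
have k_cmp (t1 t2 : R) : 0 <= t1 <= 1 -> 0 <= t2 <= 1 ->
    (gam b1 b2 k1 t1).1 = (gam b1 b2 k2 t2).1 ->
    hump k2 (b1 - b2) t2 < hump k1 (b1 - b2) t1 \/ t1 = t2 /\ (t1 = 0 \/ t1 = 1).
  rewrite !gam_x // => ht1 ht2; apply: hump_lt_of_same_abscissa => //;
  [exact/andP | lra].
split=> [t1 t2 ht1 ht2 | t1 t2 /andP[t1_gt0 t1_lt1] /andP[t2_gt0 t2_lt1] same_x].
- move=> /[dup] /(congr1 fst) same_x /(congr1 snd).
  rewrite !gam_y // same_x.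
  case: (k_cmp t1 t2 ht1 ht2 same_x) => [lt_h eq_y|[_ [->|->]] _]; first by exfalso; lra.
  + by left; apply: bezier0.
  + by right; apply: bezier1.
- have ht1 : 0 <= t1 <= 1 by rewrite !ltW.
  have ht2 : 0 <= t2 <= 1 by rewrite !ltW.
  rewrite !gam_y // same_x.
  by case: (k_cmp t1 t2 ht1 ht2 same_x) => [|[_ [t1_0|t1_1]]]; lra.
Qed.
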